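(* Let $c>1$ be an irrational number, let $f(n)=[c^{-1}(n+1)]-[c^{-1}n]$ (the indicator function of $\{[cj]:j\ge1\}$), and for a positive integer $m$ let $x=[mc]$. Then, as $m\to\infty$, $$\sum_{n=1}^x \frac{f(n)}{n} = \frac{1}{c}+ \frac{1}{c}(\log m + \log c + \gamma) -\sum_{n=1}^\infty \frac{\{c^{-1}(n+1)\}}{n(n+1)} + O\left(\frac{1}{m}\right),$$ where $\gamma$ is Euler's constant.
   Context: $[x]$ is the greatest integer not exceeding $x$ and $\{x\}=x-[x]$. *)

From Stdlib Require Import Reals Lra ZArith QArith.
From Coquelicot Require Import Coquelicot.
Open Scope R_scope.

(* [x] = greatest integer not exceeding x (Stdlib Int_part), {x} = x - [x] (frac_part). *)
Definition floorR (x : R) : R := IZR (Int_part x).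

Definition irrational (c : R) : Prop := ~ exists q : Q, c = Q2R q.

Definition fB (c : R) (n : nat) : R :=
  floorR (/ c * (INR n + 1)) - floorR (/ c * INR n).

Definition harmonic (n : nat) : R := sum_n_m (fun k => / INR k) 1 n.

Definition euler_gamma : R := real (Lim_seq (fun n => harmonic n - ln (INR n))).

Definition lhs_sum (c : R) (m : nat) : R :=
  sum_n_m (fun n => fB c n / INR n) 1 (Z.to_nat (Int_part (INR m * c))).

(* sum_{n=1}^oo {c^{-1}(n+1)} / (n(n+1)), reindexed from k = n - 1 >= 0 *)
Definition frac_series (c : R) : R :=
  Series (fun k : nat => frac_part (/ c * (INR k + 2)) / ((INR k + 1) * (INR k + 2))).

From Stdlib Require Import Reals Lra Lia ZArith QArith.
From Coquelicot Require Import Coquelicot.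
Open Scope R_scope.

(* Writing [t/c] = t/c - {t/c}, each summand f(n)/n becomes 1/(cn) plus a
   telescoping difference of fractional parts, so that
   sum_{n<=x} f(n)/n = H_x/c + 1/c - sum_{n<x} {(n+1)/c}/(n(n+1)) - {(x+1)/c}/x.
   The harmonic number is H_x = log x + gamma + O(1/x), log x = log m + log c
   + O(1/x) since x <= mc < x + 1, and the partial sum differs from the full
   series by at most 1/x.  Both O(1/x) estimates come from the same nested
   interval argument: a decreasing and an increasing sequence which bracket
   each other trap their limits. *)

Lemma ln_1p_le (y : R) : -1 < y -> ln (1 + y) <= y.
Proof.
  intros Hy. rewrite <- (ln_exp y) at 2.
  apply ln_le; [lra | apply exp_ineq1_le].
Qed.

Lemma Rinv_gt1_bounds (c : R) : 1 < c -> 0 < / c < 1.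
Proof.
  intros Hc. split; [apply Rinv_0_lt_compat; lra|].
  rewrite <- Rinv_1. apply Rinv_lt_contravar; lra.
Qed.

Lemma ln_succ_bounds (t : R) : 0 < t ->
  / (t + 1) <= ln (t + 1) - ln t <= / t.
Proof.
  intros Ht.
  assert (Hinv : 0 < / t) by (apply Rinv_0_lt_compat; lra).
  assert (Hinv1 : 0 < / (t + 1) < 1) by (apply Rinv_gt1_bounds; lra).
  split.
  - assert (Hq : ln (1 + - / (t + 1)) <= - / (t + 1)) by (apply ln_1p_le; lra).
    replace (1 + - / (t + 1)) with (t * / (t + 1)) in Hq by (field; lra).
    rewrite ln_mult, ln_Rinv in Hq by lra. lra.
  - replace (t + 1) with (t * (1 + / t)) by (field; lra).
    rewrite ln_mult by lra. pose proof (ln_1p_le (/ t)). lra.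
Qed.

Lemma real_Rbar_opp (x : Rbar) : real (Rbar_opp x) = - real x.
Proof. destruct x; simpl; lra. Qed.

Section NestedIntervals.

Variables u v : nat -> R.
Hypothesis u_decr : forall n, u (S n) <= u n.
Hypothesis v_incr : forall n, v n <= v (S n).
Hypothesis v_le_u : forall n, v n <= u n.

Lemma u_antitone (p q : nat) : (p <= q)%nat -> u q <= u p.
Proof. induction 1 as [|q _ IH]; [lra | specialize (u_decr q); lra]. Qed.

Lemma v_monotone (p q : nat) : (p <= q)%nat -> v p <= v q.
Proof. induction 1 as [|q _ IH]; [lra | specialize (v_incr q); lra]. Qed.

Lemma v_le_u_any (n k : nat) : v n <= u k.
Proof.
  destruct (Nat.le_ge_cases n k) as [Hnk | Hkn].
  - pose proof (v_monotone n k Hnk). specialize (v_le_u k). lra.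
  - pose proof (u_antitone k n Hkn). specialize (v_le_u n). lra.
Qed.

Lemma Lim_seq_decr_bracket (n : nat) : v n <= real (Lim_seq u) <= u n.
Proof.
  assert (Hex : ex_finite_lim_seq u).
  { apply ex_finite_lim_seq_decr with (v 0); [exact u_decr|].
    intros k. apply v_le_u_any. }
  destruct Hex as [l Hl]. rewrite (is_lim_seq_unique _ _ Hl). simpl.
  split.
  - apply (is_lim_seq_le (fun _ => v n) u (v n) l);
      [intros k; apply v_le_u_any | apply is_lim_seq_const | exact Hl].
  - apply (is_lim_seq_le_loc u (fun _ => u n) l (u n));
      [| exact Hl | apply is_lim_seq_const].
    exists n. apply u_antitone.
Qed.

End NestedIntervals.

Lemma Lim_seq_incr_bracket (u v : nat -> R) :
  (forall n, u (S n) <= u n) -> (forall n, v n <= v (S n)) ->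
  (forall n, v n <= u n) ->
  forall n, v n <= real (Lim_seq v) <= u n.
Proof.
  intros Hu Hv Hvu n.
  pose proof (Lim_seq_decr_bracket (fun k => - v k) (fun k => - u k)) as H.
  rewrite Lim_seq_opp, real_Rbar_opp in H.
  assert (Hn : - u n <= - real (Lim_seq v) <= - v n).
  { apply H; intros k; [specialize (Hv k) | specialize (Hu k) | specialize (Hvu k)]; lra. }
  lra.
Qed.

Lemma harmonic_S (n : nat) : harmonic (S n) = harmonic n + / INR (S n).
Proof. unfold harmonic. rewrite sum_n_Sm; [reflexivity | lia]. Qed.

Lemma harmonic_1 : harmonic 1 = 1.
Proof. unfold harmonic. rewrite sum_n_n. simpl. lra. Qed.

Lemma INR_S_pos (n : nat) : 0 < INR (S n).
Proof. apply lt_0_INR; lia. Qed.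

Lemma euler_gamma_approx (n : nat) : (1 <= n)%nat ->
  0 <= harmonic n - ln (INR n) - euler_gamma <= / INR n.
Proof.
  intros Hn. destruct n as [|N]; [lia|].
  set (u k := harmonic (S k) - ln (INR (S k))).
  set (v k := harmonic (S k) - ln (INR (S k) + 1)).
  assert (Hstep : forall k, / (INR (S k) + 1) <= ln (INR (S k) + 1) - ln (INR (S k))
                            <= / INR (S k))
    by (intros k; apply ln_succ_bounds, INR_S_pos).
  assert (Hgamma : euler_gamma = real (Lim_seq u)).
  { unfold euler_gamma. rewrite <- Lim_seq_incr_1. reflexivity. }
  assert (Hbr : v N <= euler_gamma <= u N).
  { rewrite Hgamma.
    apply Lim_seq_decr_bracket; intros k; unfold u, v;
      pose proof (Hstep k); pose proof (Hstep (S k)) as HSk;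
      rewrite ?harmonic_S, (S_INR (S k)) in *.
    - lra.
    - lra.
    - pose proof (Rinv_0_lt_compat (INR (S k) + 1)). pose proof (INR_S_pos k). lra. }
  unfold u, v in Hbr. specialize (Hstep N). lra.
Qed.

Definition frac_term (c : R) (k : nat) : R :=
  frac_part (/ c * (INR k + 1)) / (INR k * (INR k + 1)).

Lemma frac_div_bounds (x d : R) : 0 < d -> 0 <= frac_part x / d <= / d.
Proof.
  intros Hd. destruct (base_fp x) as [Hlo Hhi].
  pose proof (Rinv_0_lt_compat d Hd). unfold Rdiv. split; nra.
Qed.

Lemma frac_series_Lim (c : R) :
  frac_series c = real (Lim_seq (fun N => sum_n_m (frac_term c) 1 N)).
Proof.
  unfold frac_series, Series. rewrite <- (Lim_seq_incr_1 (fun N => sum_n_m _ 1 N)).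
  f_equal. apply Lim_seq_ext. intros N.
  unfold sum_n. rewrite <- sum_n_m_S. apply sum_n_m_ext. intros k.
  unfold frac_term. rewrite S_INR. f_equal; f_equal; lra.
Qed.

Lemma frac_series_tail (c : R) (N : nat) :
  0 <= frac_series c - sum_n_m (frac_term c) 1 N <= / (INR N + 1).
Proof.
  set (P n := sum_n_m (frac_term c) 1 n).
  assert (Hterm : forall n, 0 <= frac_term c (S n) <= / (INR n + 1) - / (INR n + 2)).
  { intros n. pose proof (pos_INR n).
    replace (/ (INR n + 1) - / (INR n + 2)) with (/ (INR (S n) * (INR (S n) + 1)))
      by (rewrite S_INR; field; lra).
    apply frac_div_bounds. pose proof (INR_S_pos n). nra. }
  assert (HP : forall n, P (S n) = P n + frac_term c (S n)).
  { intros n. unfold P. rewrite sum_n_Sm; [reflexivity | lia]. }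
  assert (Hbr : P N <= frac_series c <= P N + / (INR N + 1)).
  { rewrite frac_series_Lim. fold P.
    apply (Lim_seq_incr_bracket (fun n => P n + / (INR n + 1)) P); intros n.
    - rewrite HP, S_INR. specialize (Hterm n).
      replace (INR n + 1 + 1) with (INR n + 2) by lra. lra.
    - rewrite HP. specialize (Hterm n). lra.
    - pose proof (pos_INR n). pose proof (Rinv_0_lt_compat (INR n + 1)). lra. }
  lra.
Qed.

Lemma floorR_frac (x : R) : floorR x = x - frac_part x.
Proof. unfold floorR, frac_part. ring. Qed.

Lemma lhs_partial_sum (c : R) (N : nat) : 1 < c ->
  sum_n_m (fun n => fB c n / INR n) 1 (S N) =
  / c * harmonic (S N) + / c - sum_n_m (frac_term c) 1 N
  - frac_part (/ c * (INR (S N) + 1)) / INR (S N).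
Proof.
  intros Hc. pose proof (Rinv_gt1_bounds c Hc) as Hc'.
  induction N as [|N IH].
  - assert (Hfrac1 : frac_part (/ c) = / c).
    { symmetry. apply (Int_part_frac_part_spec (/ c) 0); [lra | simpl; lra]. }
    rewrite sum_n_n, harmonic_1, sum_n_m_zero by lia.
    unfold fB. rewrite !floorR_frac. simpl INR.
    rewrite Rmult_1_r, Hfrac1. unfold zero; simpl. field. lra.
  - rewrite sum_n_Sm, (sum_n_Sm (frac_term c)), IH, (harmonic_S (S N)) by lia.
    change (@plus _ ?x ?y) with (x + y).
    unfold fB, frac_term. rewrite !floorR_frac, (S_INR (S N)).
    pose proof (INR_S_pos N). set (t := INR (S N)) in *.
    (* [sum_n_m] lives in Coquelicot's monoid carrier; [field] needs [eq] at [R]. *)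
    match goal with |- ?a = ?b => change (@eq R a b) end. field. lra.
Qed.

Lemma floor_mul_bounds (c : R) (m : nat) : 1 < c ->
  (m <= Z.to_nat (Int_part (INR m * c)))%nat /\
  INR (Z.to_nat (Int_part (INR m * c))) <= INR m * c
    < INR (Z.to_nat (Int_part (INR m * c))) + 1.
Proof.
  intros Hc. set (z := Int_part (INR m * c)).
  destruct (base_Int_part (INR m * c)) as [Hlo Hhi]. fold z in Hlo, Hhi.
  assert (Hmc : INR m <= INR m * c) by (pose proof (pos_INR m); nra).
  assert (Hz : (Z.of_nat m <= z)%Z).
  { assert (Hlt : IZR (Z.of_nat m - 1) < IZR z)
      by (rewrite minus_IZR, <- INR_IZR_INZ; lra).
    apply lt_IZR in Hlt. lia. }
  rewrite INR_IZR_INZ, Z2Nat.id by lia.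
  split; [lia | lra].
Qed.

Theorem lemma11 (c : R) (hc1 : 1 < c) (hirr : irrational c) :
  exists (K : R) (M : nat), forall m : nat, (M <= m)%nat -> (1 <= m)%nat ->
    Rabs (lhs_sum c m
          - (/ c + / c * (ln (INR m) + ln c + euler_gamma) - frac_series c))
      <= K / INR m.
Proof.
  exists 2, 1%nat. intros m _ Hm.
  pose proof (Rinv_gt1_bounds c hc1) as Hc'.
  destruct (floor_mul_bounds c m hc1) as [HmX HX].
  unfold lhs_sum. destruct (Z.to_nat (Int_part (INR m * c))) as [|N]; [lia|].
  rewrite lhs_partial_sum by lra.
  pose proof (INR_S_pos N) as HX0.
  assert (Hm0 : 0 < INR m) by (apply (lt_INR 0); lia).
  assert (Hinv : / INR (S N) <= / INR m)
    by (apply Rinv_le_contravar, le_INR; [exact Hm0 | exact HmX]).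
  pose proof (euler_gamma_approx (S N) ltac:(lia)) as Hgamma.
  pose proof (frac_series_tail c N) as Htail. rewrite <- S_INR in Htail.
  pose proof (frac_div_bounds (/ c * (INR (S N) + 1)) (INR (S N)) HX0) as Hfrac.
  assert (Hlog : 0 <= ln (INR m) + ln c - ln (INR (S N)) <= / INR (S N)).
  { rewrite <- ln_mult by lra.
    pose proof (ln_succ_bounds (INR (S N)) HX0).
    pose proof (ln_le (INR (S N)) (INR m * c) HX0 (proj1 HX)).
    pose proof (ln_le (INR m * c) (INR (S N) + 1) ltac:(lra) (Rlt_le _ _ (proj2 HX))).
    lra. }
  set (X := INR (S N)) in *.
  set (F := frac_part (/ c * (X + 1))) in *.
  set (P := sum_n_m (frac_term c) 1 N) in *.
  replace (/ c * harmonic (S N) + / c - P - F / X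
           - (/ c + / c * (ln (INR m) + ln c + euler_gamma) - frac_series c))
    with (/ c * (harmonic (S N) - ln X - euler_gamma)
          - / c * (ln (INR m) + ln c - ln X) + (frac_series c - P) - F / X)
    by ring.
  assert (Hgamma' : 0 <= / c * (harmonic (S N) - ln X - euler_gamma) <= / X) by nra.
  assert (Hlog' : 0 <= / c * (ln (INR m) + ln c - ln X) <= / X) by nra.
  unfold Rdiv in Hfrac |- *. apply Rabs_le. lra.
Qed.
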